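(* Every $2$-regular bipartite graph is a mirror bipartite graph.
   Context: A bipartite graph $G=(V_1\cup V_2,E)$ with stable sets $V_1,V_2$ is mirror if there is a bijection $\varphi:V_1\to V_2$ such that for all $u,v\in V_1$, $u\varphi(v)\in E$ if and only if $\varphi(u)v\in E$. *)

From mathcomp Require Import all_boot.
Set Implicit Arguments. Unset Strict Implicit. Unset Printing Implicit Defensive.

(* A finite (simple) bipartite graph G = (V1 ∪ V2, E) with stable sets V1, V2
   is given by two finite vertex types V1, V2 and an edge relation
   E : V1 -> V2 -> bool  (E u w  <=>  uw is an edge, u in V1, w in V2). *)

Definition deg1 (V1 V2 : finType) (E : V1 -> V2 -> bool) (u : V1) : nat :=
  #|[set w : V2 | E u w]|.
Definition deg2 (V1 V2 : finType) (E : V1 -> V2 -> bool) (w : V2) : nat :=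
  #|[set u : V1 | E u w]|.

Definition regular_bip (k : nat) (V1 V2 : finType) (E : V1 -> V2 -> bool) : Prop :=
  (forall u : V1, deg1 E u = k) /\ (forall w : V2, deg2 E w = k).

Definition mirror_bip (V1 V2 : finType) (E : V1 -> V2 -> bool) : Prop :=
  exists phi : V1 -> V2, bijective phi /\
    forall u v : V1, E u (phi v) = E v (phi u).

From mathcomp Require Import all_boot.
Set Implicit Arguments. Unset Strict Implicit. Unset Printing Implicit Defensive.

(* Let alpha and beta be the involutions of the edge set sending an edge to
   the other edge at its V1-end, resp. at its V2-end.  Any involution theta of
   the edges with theta \o alpha = beta \o theta maps the two edges at u to the
   two edges at a single vertex phi u of V2, and this phi is a mirror bijection.
   Such a theta exists: alpha exchanges the orbits of f = beta \o alpha in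
   pairs; on one orbit of each pair let theta reverse the orbit around a base
   point (f^k r |-> f^-k r), and on the other let it be beta \o theta \o alpha. *)

Lemma can_iter (T : Type) (f g : T -> T) n : cancel f g -> cancel (iter n f) (iter n g).
Proof. by move=> fK; elim: n => // n IHn x; rewrite [iter n.+1 g _]iterSr /= fK IHn. Qed.

Section OrbitReversal.
Variables (T : finType) (f : T -> T).
Hypothesis injf : injective f.

Let symf := fconnect_sym injf.

Definition fflip x := iter (findex f (froot f x) x) (finv f) (froot f x).

Lemma iter_findex_froot x : iter (findex f (froot f x) x) f (froot f x) = x.
Proof. by apply: iter_findex; rewrite symf connect_root. Qed.

Lemma froot_f x : froot f (f x) = froot f x.
Proof. by apply/esym/(rootP symf)/fconnect1. Qed.

Lemma froot_finv x : froot f (finv f x) = froot f x.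
Proof. by rewrite -[in RHS](f_finv injf x) froot_f. Qed.

Lemma froot_iter_finv n x : froot f (iter n (finv f) x) = froot f x.
Proof. by elim: n => //= n IHn; rewrite froot_finv. Qed.

Lemma fflipE x n : iter n f (froot f x) = x -> fflip x = iter n (finv f) (froot f x).
Proof.
set r := froot f x; set k := findex f r x => def_x.
have finvK m : cancel (iter m f) (iter m (finv f)) by apply/can_iter/finv_f.
rewrite /fflip -/r -/k -[in RHS](finvK k r) iter_findex_froot -def_x.
by rewrite -iterD addnC iterD finvK.
Qed.

Lemma froot_fflip x : froot f (fflip x) = froot f x.
Proof. by rewrite froot_iter_finv (root_root symf). Qed.

Lemma fflip_root x : fflip (froot f x) = froot f x.
Proof. by rewrite (@fflipE _ 0) (root_root symf). Qed.

Lemma fflip_f x : fflip (f x) = finv f (fflip x).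
Proof.
by rewrite (@fflipE _ (findex f (froot f x) x).+1) froot_f // iterS iter_findex_froot.
Qed.

Lemma fflip_finv x : fflip (finv f x) = f (fflip x).
Proof. by rewrite -[in RHS](f_finv injf x) fflip_f f_finv. Qed.

Lemma fflip_iter_finv n x : fflip (iter n (finv f) x) = iter n f (fflip x).
Proof. by elim: n => //= n IHn; rewrite fflip_finv IHn. Qed.

Lemma fflipK : involutive fflip.
Proof.
by move=> x; rewrite {2}/fflip fflip_iter_finv fflip_root iter_findex_froot.
Qed.

Lemma fconnect_fflip x : fconnect f x (fflip x).
Proof. by rewrite -(root_connect symf) froot_fflip. Qed.
End OrbitReversal.

Section FixedPointFreeInvolutions.
Variables (D : finType) (a b : D -> D).
Hypotheses (aK : involutive a) (bK : involutive b).
Hypotheses (a_fpf : forall x, a x != x) (b_fpf : forall x, b x != x).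

Let f x := b (a x).
Let injf : injective f. Proof. by move=> x y /(inv_inj bK) /(inv_inj aK). Qed.
Let symf := fconnect_sym injf.

Let a_f x : a (f x) = finv f (a x).
Proof.
by rewrite (finv_eq_can (_ : cancel f (fun x => a (b x)))) // => y; rewrite /f bK aK.
Qed.

Let a_iter n x : a (iter n f x) = iter n (finv f) (a x).
Proof. by elim: n => //= n <-; rewrite a_f. Qed.

(* If a x = f^(e + 2j) x with e < 2, then a fixes f^j x (e = 0), or b fixes
   a (f^j x) (e = 1). *)
Lemma not_fconnect_a x : ~~ fconnect f x (a x).
Proof.
apply/negP => /iter_findex; set i := findex _ _ _ => def_ax.
have iterK n : cancel (iter n f) (iter n (finv f)) by apply/can_iter/finv_f.
set j := i./2; have : a (iter (odd i + j) f x) = iter j f x.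
  rewrite a_iter; have -> : a x = iter (odd i + j) f (iter j f x).
    by rewrite -def_ax -iterD -addnA addnn odd_double_half.
  exact: iterK.
case: (odd i) => /= [a_fy | a_y]; last by have := a_fpf (iter j f x); rewrite a_y eqxx.
have := b_fpf (a (iter j f x)).
by rewrite -[in X in _ != X]a_fy /f aK eqxx.
Qed.

Lemma fconnect_a x y : fconnect f x y -> fconnect f (a x) (a y).
Proof.
by move/iter_findex <-; rewrite a_iter -(same_fconnect_finv injf) fconnect_iter.
Qed.

(* Selects, in each pair {O, a O} of f-orbits, the one with the smaller root. *)
Let side x := enum_rank (froot f x) < enum_rank (froot f (a x)).

Let side_a x : side (a x) = ~~ side x.
Proof.
rewrite /side aK -leqNgt ltn_neqAle (inj_eq val_inj) (inj_eq enum_rank_inj).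
by rewrite eq_sym (root_connect symf) not_fconnect_a.
Qed.

Let side_fconnect x y : fconnect f x y -> side y = side x.
Proof.
move=> xy; have /(rootP symf) a_xy := fconnect_a xy.
by rewrite /side a_xy; move/(rootP symf): xy => ->.
Qed.

Let theta x := if side x then fflip f x else b (fflip f (a x)).

Let theta_a x : theta (a x) = b (theta x).
Proof. by rewrite /theta side_a aK; case: (side x); rewrite ?bK. Qed.

Let thetaK : involutive theta.
Proof.
move=> x; rewrite /theta; case sx: (side x).
  by rewrite (side_fconnect (fconnect_fflip injf x)) sx fflipK.
have b_f y : b y = f (a y) by rewrite /f aK.
rewrite b_f (side_fconnect (fconnect1 _ _)) side_a.
rewrite (side_fconnect (fconnect_fflip injf _)) side_a sx /=.
by rewrite a_f aK fflip_finv // fflipK // /f aK bK.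
Qed.

Lemma fpf_involutions_conj :
  exists theta : D -> D, involutive theta /\ forall x, theta (a x) = b (theta x).
Proof. by exists theta. Qed.
End FixedPointFreeInvolutions.

Section OtherElement.
Variables (T : finType) (A : {set T}).
Hypothesis card_A : #|A| = 2.

Definition other x := odflt x [pick y in A :\ x].

Lemma eq_other x y : x \in A -> (y == other x) = (y != x) && (y \in A).
Proof.
move=> Ax; have /cards1P[z def_Ax] : #|A :\ x| == 1.
  by move: card_A; rewrite (cardsD1 x) Ax add1n => -[->].
by rewrite /other -in_setD1 def_Ax pick_set1 in_set1.
Qed.

Lemma other_in x : x \in A -> other x \in A.
Proof. by move=> Ax; have := eq_other (other x) Ax; rewrite eqxx => /esym/andP[]. Qed.

Lemma other_neq x : x \in A -> other x != x.
Proof. by move=> Ax; have := eq_other (other x) Ax; rewrite eqxx => /esym/andP[]. Qed.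

Lemma otherK x : x \in A -> other (other x) = x.
Proof.
by move=> Ax; apply/esym/eqP; rewrite eq_other ?other_in // eq_sym other_neq.
Qed.
End OtherElement.

Section Darts.
Variables (V1 V2 : finType) (E : V1 -> V2 -> bool).

Definition dart := {p : V1 * V2 | E p.1 p.2}.
Definition dart1 (d : dart) : V1 := (val d).1.
Definition dart2 (d : dart) : V2 := (val d).2.

Lemma mirror_of_dart_involution (theta : dart -> dart) :
    involutive theta ->
    (forall d d', dart1 d = dart1 d' -> dart2 (theta d) = dart2 (theta d')) ->
    (forall d d', dart2 d = dart2 d' -> dart1 (theta d) = dart1 (theta d')) ->
    (forall u, exists w, E u w) -> (forall w, exists u, E u w) ->
  mirror_bip E.
Proof.
move=> thetaK theta12 theta21 adj1 adj2.
pose phi u := dart2 (theta (exist _ (u, xchoose (adj1 u)) (xchooseP (adj1 u)))).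
pose psi w := dart1 (theta (exist _ (xchoose (adj2 w), w) (xchooseP (adj2 w)))).
have phiE d : phi (dart1 d) = dart2 (theta d) by apply: theta12.
have psiE d : psi (dart2 d) = dart1 (theta d) by apply: theta21.
have phiK : cancel phi psi by move=> u; rewrite /phi psiE thetaK.
exists phi; split; first by exists psi => // w; rewrite /psi phiE thetaK.
suff mirror_edge u v : E u (phi v) -> E v (phi u).
  by move=> u v; apply/idP/idP; apply: mirror_edge.
move=> Euv; pose d : dart := exist _ (u, phi v) Euv.
have <- : dart1 (theta d) = v by rewrite -psiE phiK.
by rewrite (phiE d); apply: (valP (theta d)).
Qed.
End Darts.
Arguments dart1 {V1 V2 E}.
Arguments dart2 {V1 V2 E}.

Section TwoRegular.
Variables (V1 V2 : finType) (E : V1 -> V2 -> bool).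
Hypotheses (deg1E : forall u, deg1 E u = 2) (deg2E : forall w, deg2 E w = 2).

Let N1 u := [set w | E u w].
Let N2 w := [set u | E u w].

Let in_N1 (d : dart E) : dart2 d \in N1 (dart1 d). Proof. by rewrite inE (valP d). Qed.
Let in_N2 (d : dart E) : dart1 d \in N2 (dart2 d). Proof. by rewrite inE (valP d). Qed.

Let other_at1_edge (d : dart E) : E (dart1 d) (other (N1 (dart1 d)) (dart2 d)).
Proof. by have := other_in (deg1E _) (in_N1 d); rewrite inE. Qed.
Let other_at2_edge (d : dart E) : E (other (N2 (dart2 d)) (dart1 d)) (dart2 d).
Proof. by have := other_in (deg2E _) (in_N2 d); rewrite inE. Qed.

Definition other_at1 (d : dart E) : dart E := exist _ (_, _) (other_at1_edge d).
Definition other_at2 (d : dart E) : dart E := exist _ (_, _) (other_at2_edge d).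

Lemma other_at1K : involutive other_at1.
Proof.
by move=> d; apply: val_inj; rewrite /= (otherK (deg1E _) (in_N1 d)); case: d => -[].
Qed.

Lemma other_at2K : involutive other_at2.
Proof.
by move=> d; apply: val_inj; rewrite /= (otherK (deg2E _) (in_N2 d)); case: d => -[].
Qed.

Lemma other_at1_neq d : other_at1 d != d.
Proof. by apply: contra_neq (other_neq (deg1E _) (in_N1 d)) => /(congr1 dart2). Qed.

Lemma other_at2_neq d : other_at2 d != d.
Proof. by apply: contra_neq (other_neq (deg2E _) (in_N2 d)) => /(congr1 dart1). Qed.

Lemma eq_dart1 d d' : dart1 d = dart1 d' -> d' = d \/ d' = other_at1 d.
Proof.
case: d d' => [[u w] Euw] [[u' w'] Euw']; rewrite /dart1 /= => eq_u; subst u'.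
have [eq_w | neq_w] := eqVneq w' w; [left | right]; apply: val_inj => /=.
  by rewrite eq_w.
by congr pair; apply/eqP; rewrite (eq_other (deg1E _) _ (in_N1 _)) inE; apply/andP.
Qed.

Lemma eq_dart2 d d' : dart2 d = dart2 d' -> d' = d \/ d' = other_at2 d.
Proof.
case: d d' => [[u w] Euw] [[u' w'] Euw']; rewrite /dart2 /= => eq_w; subst w'.
have [eq_u | neq_u] := eqVneq u' u; [left | right]; apply: val_inj => /=.
  by rewrite eq_u.
by congr pair; apply/eqP; rewrite (eq_other (deg2E _) _ (in_N2 _)) inE; apply/andP.
Qed.

Let adj1 u : exists w, E u w.
Proof.
have /card_gt0P[w] : 0 < deg1 E u by rewrite deg1E.
by rewrite inE; exists w.
Qed.

Let adj2 w : exists u, E u w.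
Proof.
have /card_gt0P[u] : 0 < deg2 E w by rewrite deg2E.
by rewrite inE; exists u.
Qed.

Lemma two_regular_mirror : mirror_bip E.
Proof.
have [theta [thetaK theta_at1]] :=
  fpf_involutions_conj other_at1K other_at2K other_at1_neq other_at2_neq.
have theta_at2 d : theta (other_at2 d) = other_at1 (theta d).
  by rewrite -{1}(thetaK d) -theta_at1 thetaK.
apply: (mirror_of_dart_involution thetaK) => // d d'.
  by case/eq_dart1 => ->; rewrite ?theta_at1.
by case/eq_dart2 => ->; rewrite ?theta_at2.
Qed.
End TwoRegular.

Theorem lemma4 (V1 V2 : finType) (E : V1 -> V2 -> bool) :
  regular_bip 2 E -> mirror_bip E.
Proof. by case; apply: two_regular_mirror. Qed.
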